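(* For $M\in\frac12\mathbb{Z}_{>0}$ and $s\in\frac12\mathbb{Z}$, $$2\tilde\Psi^{[M;s]}(2\tau,z_1,z_2,t)=\tilde\Psi^{[2M;2s]}\Big(\tau,\frac{z_1}2,\frac{z_2}2,\frac t2\Big)+e^{-2\pi is}\,\tilde\Psi^{[2M;2s]}\Big(\tau,\frac{z_1+1}2,\frac{z_2-1}2,\frac t2\Big).$$
   Context: Let $\operatorname{Im}\tau>0$, $q=e^{2\pi i\tau}$. For $m\in\frac12\mathbb{Z}_{>0}$, $s,j\in\frac12\mathbb{Z}$ define $\Phi^{+[m;s]}(\tau,z_1,z_2)=\sum_{n\in\mathbb{Z}}\frac{e^{2\pi imn(z_1+z_2)+2\pi isz_1}q^{mn^2+sn}}{1-e^{2\pi iz_1}q^n}$, $\Theta^+_{j,m}(\tau,z)=\sum_{n\in\mathbb{Z}}e^{2\pi imz(n+\frac j{2m})}q^{m(n+\frac j{2m})^2}$, $R^+_{j,m}(\tau,z)=\sum_{n\in\frac12\mathbb{Z},\,n\equiv j\bmod 2m}\{\operatorname{sign}(n-\frac12-j+2m)-E(\psi_{m,n}(\tau,z))\}e^{-\frac{\pi in^2}{2m}\tau+2\pi inz}$, with $E(x)=2\int_0^xe^{-\pi u^2}du$, $\psi_{m,n}(\tau,z)=(n-2m\frac{\operatorname{Im}z}{\operatorname{Im}\tau})\sqrt{\frac{\operatorname{Im}\tau}m}$; $\tilde\Phi^{+[m;s]}=\Phi^{+[m;s]}-\frac12\sum_{j\in s+\mathbb{Z},\,s\le j<s+2m}R^+_{j,m}(\tau,\frac{z_1-z_2}2)\Theta^+_{j,m}(\tau,z_1+z_2)$.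 Finally $\tilde\Psi^{[M;s]}(\tau,z_1,z_2,t)=e^{-2\pi iMt}\big(\tilde\Phi^{+[M;s]}(\tau,z_1,z_2)-\tilde\Phi^{+[M;s]}(\tau,-z_2,-z_1)\big)$. *)

From Stdlib Require Import Reals ZArith.
From Coquelicot Require Import Coquelicot.
Open Scope R_scope.

Definition cexp (z : C) : C :=
  (exp (Re z) * cos (Im z), exp (Re z) * sin (Im z)).

(* e(x) := exp(2 pi i x); q^a = e(a tau) *)
Definition ee (x : C) : C := cexp (Cmult (RtoC (2 * PI)) (Cmult Ci x)).

Definition csum_nat (f : nat -> C) : C :=
  (Series (fun k => Re (f k)), Series (fun k => Im (f k))).

Definition csum_Z (f : Z -> C) : C :=
  Cplus (csum_nat (fun k => f (Z.of_nat k)))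
        (csum_nat (fun k => f (- Z.of_nat k - 1)%Z)).

Fixpoint csum_fin (N : nat) (f : nat -> C) : C :=
  match N with
  | O => RtoC 0
  | S N' => Cplus (csum_fin N' f) (f N')
  end.

Definition sgn (x : R) : R :=
  if Rlt_dec 0 x then 1 else if Rlt_dec x 0 then -1 else 0.

Definition Eerf (x : R) : R := 2 * RInt (fun u => exp (- PI * u ^ 2)) 0 x.

Definition psi (m n : R) (tau z : C) : R :=
  (n - 2 * m * Im z / Im tau) * sqrt (Im tau / m).

Definition Phi_plus (m s : R) (tau z1 z2 : C) : C :=
  csum_Z (fun n =>
    let nr := RtoC (IZR n) in
    Cdiv (ee (Cplus (Cplus (Cmult (Cmult (RtoC m) nr) (Cplus z1 z2))
                           (Cmult (RtoC s) z1))
                    (Cmult (RtoC (m * IZR n ^ 2 + s * IZR n)) tau)))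
         (Cminus (RtoC 1) (ee (Cplus z1 (Cmult nr tau))))).

Definition Theta_plus (j m : R) (tau z : C) : C :=
  csum_Z (fun n =>
    let a := IZR n + j / (2 * m) in
    ee (Cplus (Cmult (RtoC (m * a)) z) (Cmult (RtoC (m * a ^ 2)) tau))).

(* R^+_{j,m}(tau,z): n ranges over n in (1/2)Z with n = j mod 2m,
   i.e. n = j + 2 m k, k in Z *)
Definition R_plus (j m : R) (tau z : C) : C :=
  csum_Z (fun k =>
    let n := j + 2 * m * IZR k in
    Cmult (RtoC (sgn (n - 1/2 - j + 2 * m) - Eerf (psi m n tau z)))
          (ee (Cplus (Cmult (RtoC (- n ^ 2 / (4 * m))) tau)
                     (Cmult (RtoC n) z)))).

(* half-integers are encoded by their doubles: m = m2/2 (m2 > 0), s = s2/2 *)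
Definition half_nat (m2 : nat) : R := INR m2 / 2.
Definition half_Z (s2 : Z) : R := IZR s2 / 2.

(* tilde Phi^{+[m;s]}: the j-sum runs over j = s + i, i = 0, ..., 2m-1 *)
Definition Phi_tilde (m2 : nat) (s2 : Z) (tau z1 z2 : C) : C :=
  let m := half_nat m2 in
  let s := half_Z s2 in
  Cminus (Phi_plus m s tau z1 z2)
    (Cmult (RtoC (1/2))
       (csum_fin m2 (fun i =>
          let j := s + INR i in
          Cmult (R_plus j m tau (Cdiv (Cminus z1 z2) (RtoC 2)))
                (Theta_plus j m tau (Cplus z1 z2))))).

Definition Psi_tilde (M2 : nat) (s2 : Z) (tau z1 z2 t : C) : C :=
  Cmult (ee (Copp (Cmult (RtoC (half_nat M2)) t)))
    (Cminus (Phi_tilde M2 s2 tau z1 z2)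
            (Phi_tilde M2 s2 tau (Copp z2) (Copp z1))).

(* With x = e(z1/2) q^n, the pole factor 1 - e(z1) q^(2n) of Phi^{+[M;s]} at 2 tau is 1 - x^2,
   and 2/(1 - x^2) = 1/(1 - x) + 1/(1 + x).  These are the n-th terms of Phi^{+[2M;2s]} at tau
   evaluated at (z1/2, z2/2) and, since z1 -> z1 + 1 turns x into -x, at ((z1+1)/2, (z2-1)/2)
   up to the factor e(s).  In the correction term, moving (z1 - z2)/2 by 1/2 multiplies
   R^+_{j,2M} by e(j/2), and e(-s) e(j/2) = (-1)^(j-2s); so the two level-2M corrections add up
   to twice their terms with j - 2s even, which are the level-M terms at 2 tau because R^+ and
   Theta^+ only rescale.  Psi is the antisymmetrisation of Phi under (z1, z2) -> (-z2, -z1), so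
   the identity for the Phi's at both points gives the theorem. *)

From Stdlib Require Import Reals ZArith Lra Lia FunctionalExtensionality.
From Coquelicot Require Import Coquelicot.
Open Scope R_scope.

Ltac C_ext :=
  apply injective_projections;
  unfold Cdiv, Cminus, Cinv, Cplus, Cmult, Copp, RtoC, Ci, Re, Im; simpl; try field.

Lemma ee_rect (x : C) :
  ee x = (exp (- (2 * PI * Im x)) * cos (2 * PI * Re x),
          exp (- (2 * PI * Im x)) * sin (2 * PI * Re x)).
Proof.
  destruct x as [a b]; unfold ee, cexp, Re, Im; simpl.
  replace (2 * PI * (0 * a - 1 * b) - 0 * (0 * b + 1 * a)) with (- (2 * PI * b)) by ring.
  replace (2 * PI * (0 * b + 1 * a) + 0 * (0 * a - 1 * b)) with (2 * PI * a) by ring.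
  reflexivity.
Qed.

Lemma ee_real (a : R) : ee (RtoC a) = (cos (2 * PI * a), sin (2 * PI * a)).
Proof.
  rewrite ee_rect; unfold RtoC; simpl.
  rewrite Rmult_0_r, Ropp_0, exp_0, !Rmult_1_l; reflexivity.
Qed.

Lemma ee_add (x y : C) : ee (Cplus x y) = Cmult (ee x) (ee y).
Proof.
  rewrite !ee_rect; destruct x as [a b], y as [c d]; simpl.
  replace (- (2 * PI * (b + d))) with (- (2 * PI * b) + - (2 * PI * d)) by ring.
  replace (2 * PI * (a + c)) with (2 * PI * a + 2 * PI * c) by ring.
  rewrite exp_plus, cos_plus, sin_plus.
  apply injective_projections; unfold Cmult; simpl; ring.
Qed.

Lemma ee_IZR (k : Z) : ee (RtoC (IZR k)) = RtoC 1.
Proof.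
  rewrite ee_real.
  replace (2 * PI * IZR k) with (2 * (IZR k * PI)) by ring.
  rewrite cos_2a_sin, sin_2a, sin_eq_0_1 by eauto.
  apply injective_projections; simpl; ring.
Qed.

Lemma ee_0 : ee (RtoC 0) = RtoC 1.
Proof. exact (ee_IZR 0). Qed.

Lemma Im_ee_half_IZR (k : Z) : Im (ee (RtoC (IZR k / 2))) = 0.
Proof.
  rewrite ee_real; simpl.
  replace (2 * PI * (IZR k / 2)) with (IZR k * PI) by field.
  apply sin_eq_0_1; eauto.
Qed.

Lemma ee_half : ee (RtoC (1 / 2)) = RtoC (-1).
Proof.
  rewrite ee_real.
  replace (2 * PI * (1 / 2)) with PI by field.
  rewrite cos_PI, sin_PI; reflexivity.
Qed.

Lemma Cmod_ee (x : C) : Cmod (ee x) = exp (- (2 * PI * Im x)).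
Proof.
  rewrite ee_rect; unfold Cmod; simpl.
  pose proof (sin2_cos2 (2 * PI * Re x)) as Hsc; unfold Rsqr in Hsc.
  set (r := exp _) in *; set (c := cos _) in *; set (s := sin _) in *.
  match goal with |- sqrt ?a = _ => replace a with (r ^ 2) end.
  - apply sqrt_pow2, Rlt_le, exp_pos.
  - transitivity (r * r * (s * s + c * c)); [rewrite Hsc|]; ring.
Qed.

Lemma exp_le (x y : R) : x <= y -> exp x <= exp y.
Proof. intros [H | ->]; [left; apply exp_increasing|right]; auto. Qed.

Lemma quadratic_eventually_ge_abs (A B C0 : R) : 0 < A ->
  exists N, forall n, N <= Rabs n -> Rabs n <= A * n ^ 2 + B * n + C0.
Proof.
  intro HA; exists (Rmax 1 ((Rabs B + Rabs C0 + 1) / A)); intros n Hn.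
  pose proof (Rmax_l 1 ((Rabs B + Rabs C0 + 1) / A)).
  pose proof (Rmax_r 1 ((Rabs B + Rabs C0 + 1) / A)).
  assert (Hlin : Rabs B + Rabs C0 + 1 <= A * Rabs n).
  { replace (Rabs B + Rabs C0 + 1) with (A * ((Rabs B + Rabs C0 + 1) / A)) by (field; lra).
    apply Rmult_le_compat_l; lra. }
  assert (Hsq : n ^ 2 = Rabs n * Rabs n) by (rewrite <- pow2_abs; ring).
  assert (HBn : - (Rabs B * Rabs n) <= B * n).
  { rewrite <- Rabs_mult; pose proof (Rabs_maj2 (B * n)); lra. }
  pose proof (Rabs_maj2 C0); pose proof (Rabs_pos B); pose proof (Rabs_pos C0).
  rewrite Hsq; nra.
Qed.

Lemma linear_eventually_abs_ge_1 (D E : R) : E <> 0 ->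
  exists N, forall n, N <= Rabs n -> 1 <= Rabs (D + n * E).
Proof.
  intro HE; pose proof (Rabs_pos_lt E HE) as HE'.
  exists ((Rabs D + 1) / Rabs E); intros n Hn.
  assert (Hlin : Rabs D + 1 <= Rabs n * Rabs E).
  { replace (Rabs D + 1) with ((Rabs D + 1) / Rabs E * Rabs E) by (field; lra).
    apply Rmult_le_compat_r; lra. }
  pose proof (Rabs_triang (D + n * E) (- D)).
  rewrite Rabs_Ropp in *.
  replace (D + n * E + - D) with (n * E) in * by ring.
  rewrite Rabs_mult in *; lra.
Qed.

Lemma Cmod_1_sub_ee_ge (Y : C) : 1 <= Rabs (2 * PI * Im Y) ->
  1 / 2 <= Cmod (Cminus (RtoC 1) (ee Y)).
Proof.
  intro HY.
  assert (T1 : Cmod (RtoC 1) <= Cmod (Cminus (RtoC 1) (ee Y)) + Cmod (ee Y)).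
  { rewrite <- Cmod_triangle; right; f_equal; ring. }
  assert (T2 : Cmod (ee Y) <= Cmod (Copp (Cminus (RtoC 1) (ee Y))) + Cmod (RtoC 1)).
  { rewrite <- Cmod_triangle; right; f_equal; ring. }
  rewrite Cmod_opp, Cmod_R, Rabs_R1, Cmod_ee in *.
  assert (He : 2 < exp 1) by (pose proof (exp_ineq1 1 ltac:(lra)); lra).
  assert (He' : exp (- (1)) < 1 / 2).
  { rewrite exp_Ropp; apply (Rmult_lt_reg_l (exp 1)); [lra|]; field_simplify; lra. }
  destruct (Rcase_abs (2 * PI * Im Y)) as [Hneg|Hpos].
  - rewrite Rabs_left in HY by lra.
    assert (exp 1 <= exp (- (2 * PI * Im Y))) by (apply exp_le; lra).
    lra.
  - rewrite Rabs_right in HY by lra.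
    assert (exp (- (2 * PI * Im Y)) <= exp (- (1))) by (apply exp_le; lra).
    lra.
Qed.

(* [Series] is total, with a junk value on divergent input, so [csum_nat] is linear only on
   summable families. *)
Definition ex_csum_nat (f : nat -> C) : Prop :=
  ex_series (fun k => Re (f k)) /\ ex_series (fun k => Im (f k)).

(* The explicit arguments let Coquelicot's generic [plus] and [scal] unify with [Rplus], [Rmult]. *)
Ltac ex_series_lin :=
  repeat match goal with
  | |- ex_series (fun k => @?u k + @?v k) => apply (ex_series_plus u v)
  | |- ex_series (fun k => ?c * @?u k) => apply (ex_series_scal_l c u)
  end; assumption.

Lemma csum_nat_lin (a b : C) (f g : nat -> C) : ex_csum_nat f -> ex_csum_nat g ->
  csum_nat (fun k => Cplus (Cmult a (f k)) (Cmult b (g k))) =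
  Cplus (Cmult a (csum_nat f)) (Cmult b (csum_nat g)).
Proof.
  intros [Hf1 Hf2] [Hg1 Hg2]; unfold csum_nat.
  apply injective_projections; simpl.
  - rewrite (Series_ext _ (fun k => (Re a * Re (f k) + - Im a * Im (f k))
                                  + (Re b * Re (g k) + - Im b * Im (g k))))
      by (intro k; unfold Cplus, Cmult, Re, Im; simpl; ring).
    rewrite !Series_plus, !Series_scal_l; [unfold Re, Im; ring|..];
      ex_series_lin.
  - rewrite (Series_ext _ (fun k => (Im a * Re (f k) + Re a * Im (f k))
                                  + (Im b * Re (g k) + Re b * Im (g k))))
      by (intro k; unfold Cplus, Cmult, Re, Im; simpl; ring).
    rewrite !Series_plus, !Series_scal_l; [unfold Re, Im; ring|..];
      ex_series_lin.
Qed.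

Lemma csum_nat_scal_real (c : C) (f : nat -> C) : Im c = 0 ->
  csum_nat (fun k => Cmult c (f k)) = Cmult c (csum_nat f).
Proof.
  destruct c as [c0 c1]; simpl; intros ->; unfold csum_nat.
  apply injective_projections; simpl.
  - rewrite (Series_ext _ (fun k => c0 * Re (f k))) by (intro; unfold Cmult, Re, Im; simpl; ring).
    rewrite Series_scal_l; unfold Re, Im; ring.
  - rewrite (Series_ext _ (fun k => c0 * Im (f k))) by (intro; unfold Cmult, Re, Im; simpl; ring).
    rewrite Series_scal_l; unfold Re, Im; ring.
Qed.

Lemma exp_opp_INR (k : nat) : exp (- INR k) = exp (- (1)) ^ k.
Proof.
  induction k as [|k IH].
  - simpl; rewrite Ropp_0, exp_0; reflexivity.
  - rewrite S_INR, <- tech_pow_Rmult, <- IH, <- exp_plus; f_equal; ring.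
Qed.

Lemma ex_csum_nat_exp_bound (f : nat -> C) (K : nat) (c : R) :
  (forall k, (K <= k)%nat -> Cmod (f k) <= c * exp (- INR k)) -> ex_csum_nat f.
Proof.
  intro Hb.
  assert (Hgeom : ex_series (fun k => c * exp (- INR (K + k)))).
  { apply (ex_series_scal_l c (fun k => exp (- INR (K + k)))).
    apply (ex_series_incr_n (fun k => exp (- INR k)) K).
    apply (ex_series_ext (fun k => exp (- (1)) ^ k)); [intro; symmetry; apply exp_opp_INR|].
    apply ex_series_geom; rewrite Rabs_pos_eq by (apply Rlt_le, exp_pos).
    pose proof (exp_increasing (- (1)) 0 ltac:(lra)) as Hlt; rewrite exp_0 in Hlt; exact Hlt. }
  split; apply (ex_series_incr_n _ K);
    apply (@ex_series_le R_AbsRing R_CompleteNormedModule _ _) with (2 := Hgeom);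
    intro k; change norm with Rabs; simpl;
    (eapply Rle_trans; [|apply Hb; lia]).
  - apply re_le_Cmod.
  - exact (Rle_trans _ _ _ (Rmax_r _ _) (Rmax_Cmod (f (K + k)%nat))).
Qed.

Definition ex_csum_Z (f : Z -> C) : Prop :=
  ex_csum_nat (fun k => f (Z.of_nat k)) /\ ex_csum_nat (fun k => f (- Z.of_nat k - 1)%Z).

Lemma ex_csum_Z_exp_bound (f : Z -> C) (N c : R) :
  (forall n : Z, N <= Rabs (IZR n) -> Cmod (f n) <= c * exp (- Rabs (IZR n))) ->
  ex_csum_Z f.
Proof.
  intro Hb; destruct (INR_unbounded N) as [K HK].
  split; apply (ex_csum_nat_exp_bound _ K c); intros k Hk;
    pose proof (le_INR _ _ Hk); pose proof (pos_INR k).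
  - replace (INR k) with (Rabs (IZR (Z.of_nat k)))
      by (rewrite <- INR_IZR_INZ, Rabs_pos_eq; lra).
    apply Hb; rewrite <- INR_IZR_INZ, Rabs_pos_eq; lra.
  - assert (Habs : Rabs (IZR (- Z.of_nat k - 1)) = INR k + 1).
    { rewrite minus_IZR, opp_IZR, <- INR_IZR_INZ, Rabs_left by lra; ring. }
    assert (Hn : Cmod (f (- Z.of_nat k - 1)%Z) <= c * exp (- (INR k + 1)))
      by (rewrite <- Habs; apply Hb; rewrite Habs; lra).
    assert (Hc : 0 <= c).
    { pose proof (Cmod_ge_0 (f (- Z.of_nat k - 1)%Z)); pose proof (exp_pos (- (INR k + 1))); nra. }
    eapply Rle_trans; [exact Hn|].
    apply Rmult_le_compat_l; [exact Hc|apply exp_le; lra].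
Qed.

Lemma csum_Z_ext (f g : Z -> C) : (forall n, f n = g n) -> csum_Z f = csum_Z g.
Proof. intro H; f_equal; apply functional_extensionality; exact H. Qed.

Lemma csum_Z_lin (a b : C) (f g : Z -> C) : ex_csum_Z f -> ex_csum_Z g ->
  csum_Z (fun n => Cplus (Cmult a (f n)) (Cmult b (g n))) =
  Cplus (Cmult a (csum_Z f)) (Cmult b (csum_Z g)).
Proof.
  intros [Hf1 Hf2] [Hg1 Hg2]; unfold csum_Z.
  rewrite (csum_nat_lin a b _ _ Hf1 Hg1), (csum_nat_lin a b _ _ Hf2 Hg2); ring.
Qed.

Lemma csum_Z_scal_real (c : C) (f : Z -> C) : Im c = 0 ->
  csum_Z (fun n => Cmult c (f n)) = Cmult c (csum_Z f).
Proof. intro Hc; unfold csum_Z; rewrite !csum_nat_scal_real by exact Hc; ring. Qed.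

Lemma Cmod_ee_div_le (X Y : C) (n : R) :
  Rabs n <= 2 * PI * Im X -> 1 <= Rabs (2 * PI * Im Y) ->
  Cmod (Cdiv (ee X) (Cminus (RtoC 1) (ee Y))) <= 2 * exp (- Rabs n).
Proof.
  intros HX HY.
  pose proof (Cmod_1_sub_ee_ge Y HY) as Hden.
  assert (Hnz : Cminus (RtoC 1) (ee Y) <> RtoC 0)
    by (intro Hz; rewrite Hz, Cmod_0 in Hden; lra).
  rewrite Cmod_div, Cmod_ee by exact Hnz.
  assert (Hnum : exp (- (2 * PI * Im X)) <= exp (- Rabs n)) by (apply exp_le; lra).
  pose proof (exp_pos (- (2 * PI * Im X))).
  apply (Rmult_le_reg_r (Cmod (Cminus (RtoC 1) (ee Y)))); [lra|].
  unfold Rdiv; rewrite Rmult_assoc, Rinv_l by lra; nra.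
Qed.

Definition Phi_summand (m s : R) (tau z1 z2 : C) (n : Z) : C :=
  let nr := RtoC (IZR n) in
  Cdiv (ee (Cplus (Cplus (Cmult (Cmult (RtoC m) nr) (Cplus z1 z2)) (Cmult (RtoC s) z1))
                  (Cmult (RtoC (m * IZR n ^ 2 + s * IZR n)) tau)))
       (Cminus (RtoC 1) (ee (Cplus z1 (Cmult nr tau)))).

Lemma Phi_plus_csum_Z (m s : R) (tau z1 z2 : C) :
  Phi_plus m s tau z1 z2 = csum_Z (Phi_summand m s tau z1 z2).
Proof. reflexivity. Qed.

Lemma ex_csum_Z_Phi_summand (m s : R) (tau z1 z2 : C) : 0 < m -> 0 < Im tau ->
  ex_csum_Z (Phi_summand m s tau z1 z2).
Proof.
  intros Hm Ht; pose proof PI_RGT_0.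
  destruct (quadratic_eventually_ge_abs (2 * PI * (m * Im tau))
              (2 * PI * (m * (Im z1 + Im z2) + s * Im tau)) (2 * PI * (s * Im z1)))
    as [N1 HN1]; [apply Rmult_lt_0_compat; nra|].
  destruct (linear_eventually_abs_ge_1 (2 * PI * Im z1) (2 * PI * Im tau))
    as [N2 HN2]; [nra|].
  apply (ex_csum_Z_exp_bound _ (Rmax N1 N2) 2); intros n Hn.
  pose proof (Rmax_l N1 N2); pose proof (Rmax_r N1 N2).
  apply Cmod_ee_div_le.
  - replace (2 * PI * Im _) with
      (2 * PI * (m * Im tau) * IZR n ^ 2 + 2 * PI * (m * (Im z1 + Im z2) + s * Im tau) * IZR n
       + 2 * PI * (s * Im z1))
      by (destruct z1, z2, tau; unfold Cplus, Cmult, RtoC, Im; simpl; ring).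
    apply HN1; lra.
  - replace (2 * PI * Im _) with (2 * PI * Im z1 + IZR n * (2 * PI * Im tau))
      by (destruct z1, tau; unfold Cplus, Cmult, RtoC, Im; simpl; ring).
    apply HN2; lra.
Qed.

Lemma Cdiv_1_sub_sqr (a y : C) : Cminus (RtoC 1) (Cmult y y) <> RtoC 0 ->
  Cmult (RtoC 2) (Cdiv a (Cminus (RtoC 1) (Cmult y y))) =
  Cplus (Cdiv a (Cminus (RtoC 1) y)) (Cdiv a (Cminus (RtoC 1) (Copp y))).
Proof.
  intro Hsq.
  assert (Hm : Cminus (RtoC 1) y <> RtoC 0).
  { intro H0; apply Hsq.
    replace (Cminus (RtoC 1) (Cmult y y)) with (Cmult (Cminus (RtoC 1) y) (Cplus (RtoC 1) y))
      by ring.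
    rewrite H0; ring. }
  assert (Hp : Cminus (RtoC 1) (Copp y) <> RtoC 0).
  { intro H0; apply Hsq.
    replace (Cminus (RtoC 1) (Cmult y y)) with (Cmult (Cminus (RtoC 1) (Copp y)) (Cminus (RtoC 1) y))
      by ring.
    rewrite H0; ring. }
  field; auto.
Qed.

Lemma Phi_summand_double (m s : R) (tau w1 w2 : C) (n : Z) :
  ee (Cplus w1 (Cmult (RtoC (2 * IZR n)) tau)) <> RtoC 1 ->
  Cmult (RtoC 2) (Phi_summand m s (Cmult (RtoC 2) tau) w1 w2 n) =
  Cplus (Phi_summand (2 * m) (2 * s) tau (Cdiv w1 (RtoC 2)) (Cdiv w2 (RtoC 2)) n)
        (Cmult (ee (RtoC (- s)))
           (Phi_summand (2 * m) (2 * s) tau (Cdiv (Cplus w1 (RtoC 1)) (RtoC 2))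
              (Cdiv (Cminus w2 (RtoC 1)) (RtoC 2)) n)).
Proof.
  intro Hpole; unfold Phi_summand.
  set (X := Cplus (Cplus (Cmult (Cmult (RtoC (2 * m)) (RtoC (IZR n)))
                                (Cplus (Cdiv w1 (RtoC 2)) (Cdiv w2 (RtoC 2))))
                         (Cmult (RtoC (2 * s)) (Cdiv w1 (RtoC 2))))
                  (Cmult (RtoC (2 * m * IZR n ^ 2 + 2 * s * IZR n)) tau)).
  set (Y := Cplus (Cdiv w1 (RtoC 2)) (Cmult (RtoC (IZR n)) tau)).
  match goal with
  | |- Cmult _ (Cdiv (ee ?A) (Cminus _ (ee ?B))) =
       Cplus _ (Cmult _ (Cdiv (ee ?A') (Cminus _ (ee ?B')))) =>
    replace A with X by (unfold X; destruct w1, w2, tau; C_ext);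
    replace B with (Cplus Y Y) by (unfold Y; destruct w1, tau; C_ext);
    replace A' with (Cplus X (RtoC s)) by (unfold X; destruct w1, w2, tau; C_ext);
    replace B' with (Cplus Y (RtoC (1 / 2))) by (unfold Y; destruct w1, tau; C_ext)
  end.
  rewrite !ee_add, ee_half, Cdiv_1_sub_sqr.
  - replace (Cminus (RtoC 1) (Cmult (ee Y) (RtoC (-1)))) with (Cminus (RtoC 1) (Copp (ee Y)))
      by C_ext.
    assert (Hs : Cmult (ee (RtoC (- s))) (ee (RtoC s)) = RtoC 1).
    { rewrite <- ee_add, <- ee_0; f_equal; C_ext. }
    transitivity (Cplus (Cdiv (ee X) (Cminus (RtoC 1) (ee Y)))
                    (Cmult (Cmult (ee (RtoC (- s))) (ee (RtoC s)))
                       (Cdiv (ee X) (Cminus (RtoC 1) (Copp (ee Y))))));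
      [rewrite Hs|unfold Cdiv]; ring.
  - rewrite <- ee_add; intro H0; apply Hpole.
    replace (Cplus w1 (Cmult (RtoC (2 * IZR n)) tau)) with (Cplus Y Y)
      by (unfold Y; destruct w1, tau; C_ext).
    replace (ee (Cplus Y Y)) with (Cminus (RtoC 1) (Cminus (RtoC 1) (ee (Cplus Y Y)))) by ring.
    rewrite H0; ring.
Qed.

Lemma Phi_plus_double (m s : R) (tau w1 w2 : C) : 0 < m -> 0 < Im tau ->
  (forall n : Z, ee (Cplus w1 (Cmult (RtoC (2 * IZR n)) tau)) <> RtoC 1) ->
  Cmult (RtoC 2) (Phi_plus m s (Cmult (RtoC 2) tau) w1 w2) =
  Cplus (Phi_plus (2 * m) (2 * s) tau (Cdiv w1 (RtoC 2)) (Cdiv w2 (RtoC 2)))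
        (Cmult (ee (RtoC (- s)))
           (Phi_plus (2 * m) (2 * s) tau (Cdiv (Cplus w1 (RtoC 1)) (RtoC 2))
              (Cdiv (Cminus w2 (RtoC 1)) (RtoC 2)))).
Proof.
  intros Hm Ht Hpoles; rewrite !Phi_plus_csum_Z.
  rewrite <- csum_Z_scal_real by (simpl; ring).
  rewrite (csum_Z_ext _ _ (fun n => Phi_summand_double m s tau w1 w2 n (Hpoles n))).
  rewrite <- (Cmult_1_l (csum_Z (Phi_summand _ _ _ (Cdiv w1 _) _))), <- csum_Z_lin
    by (apply ex_csum_Z_Phi_summand; lra).
  apply csum_Z_ext; intro n; ring.
Qed.

Lemma Theta_plus_double (j m : R) (tau v : C) : m <> 0 ->
  Theta_plus (2 * j) (2 * m) tau (Cdiv v (RtoC 2)) = Theta_plus j m (Cmult (RtoC 2) tau) v.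
Proof.
  intro Hm; unfold Theta_plus; apply csum_Z_ext; intro n.
  replace (IZR n + 2 * j / (2 * (2 * m))) with (IZR n + j / (2 * m)) by (field; auto).
  f_equal; destruct v, tau; C_ext; auto.
Qed.

Lemma sgn_pos (x : R) : 0 < x -> sgn x = 1.
Proof. intro; unfold sgn; destruct (Rlt_dec 0 x); lra. Qed.

Lemma sgn_neg (x : R) : x < 0 -> sgn x = -1.
Proof. intro; unfold sgn; destruct (Rlt_dec 0 x); [lra|]; destruct (Rlt_dec x 0); lra. Qed.

Lemma psi_double (m n : R) (tau v : C) : 0 < m -> 0 < Im tau ->
  psi (2 * m) (2 * n) tau (Cdiv v (RtoC 2)) = psi m n (Cmult (RtoC 2) tau) v.
Proof.
  intros Hm Ht; unfold psi.
  replace (Im (Cmult (RtoC 2) tau)) with (2 * Im tau) by (destruct tau; unfold Im; simpl; ring).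
  replace (Im (Cdiv v (RtoC 2))) with (Im v / 2) by (destruct v; unfold Im; simpl; field).
  replace (2 * Im tau / m) with (Rsqr 2 * (Im tau / (2 * m))) by (unfold Rsqr; field; lra).
  rewrite sqrt_mult, sqrt_Rsqr by (try apply Rle_0_sqr; try apply Rlt_le, Rdiv_lt_0_compat; lra).
  field; lra.
Qed.

(* With n = j + 2 m k the sign arguments are 2 m (k + 1) - 1/2 and 4 m (k + 1) - 1/2;
   1/4 < m makes them agree in sign. *)
Lemma R_plus_double (j m : R) (tau v : C) : 1 / 4 < m -> 0 < Im tau ->
  R_plus (2 * j) (2 * m) tau (Cdiv v (RtoC 2)) = R_plus j m (Cmult (RtoC 2) tau) v.
Proof.
  intros Hm Ht; unfold R_plus; apply csum_Z_ext; intro k.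
  replace (2 * j + 2 * (2 * m) * IZR k) with (2 * (j + 2 * m * IZR k)) by ring.
  rewrite psi_double by lra.
  f_equal.
  - do 2 f_equal.
    destruct (Z_le_gt_dec 0 k) as [Hk|Hk].
    + apply IZR_le in Hk; rewrite !sgn_pos; nra.
    + assert (Hk' : (k <= -1)%Z) by lia; apply IZR_le in Hk'; rewrite !sgn_neg; nra.
  - f_equal; destruct v, tau; C_ext; lra.
Qed.

Lemma R_plus_shift_half (J B : Z) (tau u : C) :
  R_plus (IZR J) (IZR B) tau (Cplus u (RtoC (1 / 2))) =
  Cmult (ee (RtoC (IZR J / 2))) (R_plus (IZR J) (IZR B) tau u).
Proof.
  unfold R_plus; rewrite <- csum_Z_scal_real by apply Im_ee_half_IZR.
  apply csum_Z_ext; intro k.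
  set (n := IZR J + 2 * IZR B * IZR k).
  replace (psi (IZR B) n tau (Cplus u (RtoC (1 / 2)))) with (psi (IZR B) n tau u)
    by (unfold psi; do 4 f_equal; destruct u; unfold Im; simpl; ring).
  replace (Cmult (RtoC n) (Cplus u (RtoC (1 / 2))))
    with (Cplus (Cmult (RtoC n) u) (Cplus (RtoC (IZR J / 2)) (RtoC (IZR (B * k)))))
    by (rewrite mult_IZR; unfold n; destruct u; C_ext).
  rewrite Cplus_assoc, !ee_add, ee_IZR; ring.
Qed.

Lemma csum_fin_ext (N : nat) (f g : nat -> C) :
  (forall i, (i < N)%nat -> f i = g i) -> csum_fin N f = csum_fin N g.
Proof.
  induction N as [|N IH]; intro H; simpl; [reflexivity|].
  rewrite IH, H; [reflexivity | lia | intros; apply H; lia].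
Qed.

Lemma csum_fin_plus (N : nat) (f g : nat -> C) :
  csum_fin N (fun i => Cplus (f i) (g i)) = Cplus (csum_fin N f) (csum_fin N g).
Proof. induction N as [|N IH]; simpl; [C_ext|rewrite IH; ring]. Qed.

Lemma csum_fin_scal (N : nat) (c : C) (f : nat -> C) :
  csum_fin N (fun i => Cmult c (f i)) = Cmult c (csum_fin N f).
Proof. induction N as [|N IH]; simpl; [C_ext|rewrite IH; ring]. Qed.

Lemma csum_fin_even (N : nat) (f : nat -> C) :
  csum_fin (2 * N) (fun i => Cplus (f i) (Cmult (ee (RtoC (INR i / 2))) (f i))) =
  Cmult (RtoC 2) (csum_fin N (fun i => f (2 * i)%nat)).
Proof.
  induction N as [|N IH]; [simpl; C_ext|].
  replace (2 * S N)%nat with (S (S (2 * N))) by lia; cbn [csum_fin]; rewrite IH.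
  replace (RtoC (INR (2 * N) / 2)) with (RtoC (IZR (Z.of_nat N)))
    by (rewrite <- INR_IZR_INZ, mult_INR; simpl; f_equal; field).
  replace (RtoC (INR (S (2 * N)) / 2)) with (Cplus (RtoC (IZR (Z.of_nat N))) (RtoC (1 / 2)))
    by (rewrite <- INR_IZR_INZ, S_INR, mult_INR; simpl; C_ext).
  rewrite ee_add, ee_IZR, ee_half.
  replace (S (2 * N)) with (2 * N + 1)%nat by lia; ring.
Qed.

Definition R_Theta_term (m s : R) (tau u v : C) (i : nat) : C :=
  Cmult (R_plus (s + INR i) m tau u) (Theta_plus (s + INR i) m tau v).

Lemma Phi_tilde_R_Theta (M2 : nat) (s2 : Z) (tau z1 z2 : C) :
  Phi_tilde M2 s2 tau z1 z2 =
  Cminus (Phi_plus (half_nat M2) (half_Z s2) tau z1 z2)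
    (Cmult (RtoC (1 / 2))
       (csum_fin M2 (R_Theta_term (half_nat M2) (half_Z s2) tau
                       (Cdiv (Cminus z1 z2) (RtoC 2)) (Cplus z1 z2)))).
Proof. reflexivity. Qed.

Lemma half_nat_double (M2 : nat) : half_nat (2 * M2) = 2 * half_nat M2.
Proof. unfold half_nat; rewrite mult_INR; simpl; field. Qed.

Lemma half_Z_double (s2 : Z) : half_Z (2 * s2) = 2 * half_Z s2.
Proof. unfold half_Z; rewrite mult_IZR; field. Qed.

Lemma R_Theta_term_double (m s : R) (tau u v : C) (i : nat) : 1 / 4 < m -> 0 < Im tau ->
  R_Theta_term (2 * m) (2 * s) tau (Cdiv u (RtoC 2)) (Cdiv v (RtoC 2)) (2 * i) =
  R_Theta_term m s (Cmult (RtoC 2) tau) u v i.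
Proof.
  intros Hm Ht; unfold R_Theta_term.
  replace (2 * s + INR (2 * i)) with (2 * (s + INR i)) by (rewrite mult_INR; simpl; ring).
  rewrite R_plus_double, Theta_plus_double by lra; reflexivity.
Qed.

Lemma R_Theta_term_shift_half (B S : Z) (tau u v : C) (i : nat) :
  R_Theta_term (IZR B) (IZR S) tau (Cplus u (RtoC (1 / 2))) v i =
  Cmult (ee (RtoC ((IZR S + INR i) / 2))) (R_Theta_term (IZR B) (IZR S) tau u v i).
Proof.
  unfold R_Theta_term.
  replace (IZR S + INR i) with (IZR (S + Z.of_nat i)) by (rewrite plus_IZR, <- INR_IZR_INZ; ring).
  rewrite R_plus_shift_half; ring.
Qed.

Lemma csum_R_Theta_term_double (M2 : nat) (s2 : Z) (tau u v : C) :
  (0 < M2)%nat -> 0 < Im tau ->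
  let m := half_nat M2 in let s := half_Z s2 in
  Cplus (csum_fin (2 * M2) (R_Theta_term (2 * m) (2 * s) tau (Cdiv u (RtoC 2)) (Cdiv v (RtoC 2))))
        (Cmult (ee (RtoC (- s)))
           (csum_fin (2 * M2) (R_Theta_term (2 * m) (2 * s) tau
                                 (Cplus (Cdiv u (RtoC 2)) (RtoC (1 / 2))) (Cdiv v (RtoC 2))))) =
  Cmult (RtoC 2) (csum_fin M2 (R_Theta_term m s (Cmult (RtoC 2) tau) u v)).
Proof.
  intros HM Ht m s.
  assert (Hm : 1 / 4 < m) by (unfold m, half_nat; pose proof (le_INR 1 M2 HM); simpl in *; lra).
  assert (Hm2 : 2 * m = IZR (Z.of_nat M2)) by (unfold m, half_nat; rewrite <- INR_IZR_INZ; field).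
  assert (Hs2 : 2 * s = IZR s2) by (unfold s, half_Z; field).
  rewrite <- csum_fin_scal, <- csum_fin_plus.
  set (T := R_Theta_term (2 * m) (2 * s) tau (Cdiv u (RtoC 2)) (Cdiv v (RtoC 2))).
  rewrite (csum_fin_ext _ _ (fun i => Cplus (T i) (Cmult (ee (RtoC (INR i / 2))) (T i)))).
  - rewrite csum_fin_even; f_equal; apply csum_fin_ext; intros i _.
    apply R_Theta_term_double; assumption.
  - intros i _; f_equal; unfold T.
    rewrite Hm2, Hs2, R_Theta_term_shift_half, Cmult_assoc, <- ee_add.
    do 2 f_equal; unfold s, half_Z; C_ext.
Qed.

Lemma Phi_tilde_double (M2 : nat) (s2 : Z) (tau w1 w2 : C) : (0 < M2)%nat -> 0 < Im tau ->
  (forall n : Z, ee (Cplus w1 (Cmult (RtoC (2 * IZR n)) tau)) <> RtoC 1) ->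
  Cmult (RtoC 2) (Phi_tilde M2 s2 (Cmult (RtoC 2) tau) w1 w2) =
  Cplus (Phi_tilde (2 * M2) (2 * s2) tau (Cdiv w1 (RtoC 2)) (Cdiv w2 (RtoC 2)))
        (Cmult (ee (RtoC (- half_Z s2)))
           (Phi_tilde (2 * M2) (2 * s2) tau (Cdiv (Cplus w1 (RtoC 1)) (RtoC 2))
              (Cdiv (Cminus w2 (RtoC 1)) (RtoC 2)))).
Proof.
  intros HM Ht Hpoles.
  assert (Hm : 0 < half_nat M2) by (unfold half_nat; apply lt_0_INR in HM; lra).
  pose proof (Phi_plus_double (half_nat M2) (half_Z s2) tau w1 w2 Hm Ht Hpoles) as HPhi.
  pose proof (csum_R_Theta_term_double M2 s2 tau (Cdiv (Cminus w1 w2) (RtoC 2)) (Cplus w1 w2) HM Ht)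
    as HRT; cbv zeta in HRT.
  rewrite !Phi_tilde_R_Theta, half_nat_double, half_Z_double.
  replace (Cdiv (Cminus (Cdiv w1 (RtoC 2)) (Cdiv w2 (RtoC 2))) (RtoC 2))
    with (Cdiv (Cdiv (Cminus w1 w2) (RtoC 2)) (RtoC 2)) by (destruct w1, w2; C_ext).
  replace (Cdiv (Cminus (Cdiv (Cplus w1 (RtoC 1)) (RtoC 2)) (Cdiv (Cminus w2 (RtoC 1)) (RtoC 2)))
                (RtoC 2))
    with (Cplus (Cdiv (Cdiv (Cminus w1 w2) (RtoC 2)) (RtoC 2)) (RtoC (1 / 2)))
    by (destruct w1, w2; C_ext).
  replace (Cplus (Cdiv w1 (RtoC 2)) (Cdiv w2 (RtoC 2))) with (Cdiv (Cplus w1 w2) (RtoC 2))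
    by (destruct w1, w2; C_ext).
  replace (Cplus (Cdiv (Cplus w1 (RtoC 1)) (RtoC 2)) (Cdiv (Cminus w2 (RtoC 1)) (RtoC 2)))
    with (Cdiv (Cplus w1 w2) (RtoC 2)) by (destruct w1, w2; C_ext).
  match goal with |- Cmult (RtoC 2) (Cminus ?P (Cmult ?h ?S)) = _ =>
    replace (Cmult (RtoC 2) (Cminus P (Cmult h S)))
      with (Cminus (Cmult (RtoC 2) P) (Cmult h (Cmult (RtoC 2) S))) by ring end.
  rewrite HPhi, <- HRT; ring.
Qed.

Theorem lemma6p19 (M2 : nat) (s2 : Z) (tau z1 z2 t : C)
  (hM : (0 < M2)%nat) (htau : 0 < Im tau)
  (hz1 : forall n : Z, ee (Cplus z1 (Cmult (RtoC (2 * IZR n)) tau)) <> RtoC 1)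
  (hz2 : forall n : Z, ee (Cplus (Copp z2) (Cmult (RtoC (2 * IZR n)) tau)) <> RtoC 1) :
  Cmult (RtoC 2) (Psi_tilde M2 s2 (Cmult (RtoC 2) tau) z1 z2 t) =
  Cplus
    (Psi_tilde (2 * M2) (2 * s2) tau
       (Cdiv z1 (RtoC 2)) (Cdiv z2 (RtoC 2)) (Cdiv t (RtoC 2)))
    (Cmult (ee (RtoC (- half_Z s2)))
       (Psi_tilde (2 * M2) (2 * s2) tau
          (Cdiv (Cplus z1 (RtoC 1)) (RtoC 2))
          (Cdiv (Cminus z2 (RtoC 1)) (RtoC 2)) (Cdiv t (RtoC 2)))).
Proof.
  unfold Psi_tilde; rewrite half_nat_double.
  replace (Cmult (RtoC (2 * half_nat M2)) (Cdiv t (RtoC 2))) with (Cmult (RtoC (half_nat M2)) t)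
    by (destruct t; C_ext).
  replace (Copp (Cdiv z2 (RtoC 2))) with (Cdiv (Copp z2) (RtoC 2)) by (destruct z2; C_ext).
  replace (Copp (Cdiv z1 (RtoC 2))) with (Cdiv (Copp z1) (RtoC 2)) by (destruct z1; C_ext).
  replace (Copp (Cdiv (Cminus z2 (RtoC 1)) (RtoC 2)))
    with (Cdiv (Cplus (Copp z2) (RtoC 1)) (RtoC 2)) by (destruct z2; C_ext).
  replace (Copp (Cdiv (Cplus z1 (RtoC 1)) (RtoC 2)))
    with (Cdiv (Cminus (Copp z1) (RtoC 1)) (RtoC 2)) by (destruct z1; C_ext).
  transitivity
    (Cmult (ee (Copp (Cmult (RtoC (half_nat M2)) t)))
       (Cminus (Cmult (RtoC 2) (Phi_tilde M2 s2 (Cmult (RtoC 2) tau) z1 z2))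
               (Cmult (RtoC 2) (Phi_tilde M2 s2 (Cmult (RtoC 2) tau) (Copp z2) (Copp z1)))));
    [ring|].
  rewrite !Phi_tilde_double by assumption; ring.
Qed.
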